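(* Let $F$ be a quantifier-free formula and let $\mathbf c$ be a finite set of object constants containing every object constant occurring in $F$. Then the formula $F^*(\mathbf e_{\mathbf c})\rightarrow\mathit{in}_{\mathbf c}(\mathrm{RV}(F))$ is logically valid.
   Context: Formulas are first-order formulas with object constants, predicate constants and equality but no function constants of arity $>0$; primitive connectives are $\bot,\land,\lor,\rightarrow$ ($\neg F$ is $F\rightarrow\bot$, $\top$ is $\bot\rightarrow\bot$). Let $\mathbf p=p_1,\dots,p_n$ be the predicate constants occurring in $F$ and $\mathbf u=u_1,\dots,u_n$ predicate variables of matching arities. $F^*(\mathbf u)$ is defined recursively: $p_i(\mathbf t)^*=u_i(\mathbf t)$; $(t_1=t_2)^*=(t_1=t_2)$; $\bot^*=\bot$; $(G\land H)^*=G^*\land H^*$; $(G\lor H)^*=G^*\lor H^*$; $(G\rightarrow H)^*=(G^*\rightarrow H^* )\land(G\rightarrow H)$; $(\forall xG)^*=\forall xG^*$; $(\exists xG)^*=\exists xG^*$. For a finite set $\mathbf c$ of object constants, $\mathit{in}_{\mathbf c}(x_1,\dots,x_m)$ denotes $\bigwedge_{1\le j\le m}\bigvee_{c\in\mathbf c}x_j=c$; for a finite set $V$ of variables, $\mathit{in}_{\mathbf c}(V)$ denotes $\mathit{in}_{\mathbf c}$ applied to the variables of $V$ (the empty conjunction being $\top$). $\mathbf e_{\mathbf c}$ denotes the list of predicate expressions $\lambda\mathbf x(p_i(\mathbf x)\land\mathit{in}_{\mathbf c}(\mathbf x))$, and $F^*(\mathbf e_{\mathbf c})$ is the result of replacing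 each atomic part $u_i(\mathbf t)$ of $F^*(\mathbf u)$ by $p_i(\mathbf t)\land\mathit{in}_{\mathbf c}(\mathbf t)$. Restricted variables: $\mathrm{RV}(F)$ for quantifier-free $F$: if $F$ is an equality between two variables, $\mathrm{RV}(F)=\emptyset$; if $F$ is any other atomic formula, $\mathrm{RV}(F)$ is the set of variables occurring in $F$; $\mathrm{RV}(\bot)=\emptyset$; $\mathrm{RV}(G\land H)=\mathrm{RV}(G)\cup\mathrm{RV}(H)$; $\mathrm{RV}(G\lor H)=\mathrm{RV}(G)\cap\mathrm{RV}(H)$; $\mathrm{RV}(G\rightarrow H)=\emptyset$. *)

From Stdlib Require Import List Arith.
Import ListNotations.

Inductive term : Type :=
| TVar : nat -> term
| TConst : nat -> term.

Inductive formula : Type :=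
| FBot : formula
| FEq : term -> term -> formula
| FPred : nat -> list term -> formula
| FPVar : nat -> list term -> formula
| FAnd : formula -> formula -> formula
| FOr : formula -> formula -> formula
| FImp : formula -> formula -> formula
| FAll : nat -> formula -> formula
| FEx : nat -> formula -> formula.

Definition FTop : formula := FImp FBot FBot.

Fixpoint bigAnd (l : list formula) : formula :=
  match l with [] => FTop | [f] => f | f :: l' => FAnd f (bigAnd l') end.
Fixpoint bigOr (l : list formula) : formula :=
  match l with [] => FBot | [f] => f | f :: l' => FOr f (bigOr l') end.

Definition in_c (c : list nat) (ts : list term) : formula :=
  bigAnd (map (fun t => bigOr (map (fun k => FEq t (TConst k)) c)) ts).

Definition in_c_vars (c : list nat) (V : list nat) : formula :=
  in_c c (map TVar V).

Fixpoint star (F : formula) : formula :=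
  match F with
  | FBot => FBot
  | FEq t1 t2 => FEq t1 t2
  | FPred i ts => FPVar i ts
  | FPVar i ts => FPVar i ts
  | FAnd G H => FAnd (star G) (star H)
  | FOr G H => FOr (star G) (star H)
  | FImp G H => FAnd (FImp (star G) (star H)) (FImp G H)
  | FAll x G => FAll x (star G)
  | FEx x G => FEx x (star G)
  end.

(* Substituting the predicate expressions e_c = \x (p_i(x) /\ in_c(x)) for the u_i:
   each atomic part u_i(t) becomes p_i(t) /\ in_c(t). *)
Fixpoint subst_e (c : list nat) (F : formula) : formula :=
  match F with
  | FPVar i ts => FAnd (FPred i ts) (in_c c ts)
  | FAnd G H => FAnd (subst_e c G) (subst_e c H)
  | FOr G H => FOr (subst_e c G) (subst_e c H)
  | FImp G H => FImp (subst_e c G) (subst_e c H)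
  | FAll x G => FAll x (subst_e c G)
  | FEx x G => FEx x (subst_e c G)
  | _ => F
  end.

Definition star_e (c : list nat) (F : formula) : formula := subst_e c (star F).

(* Formulas of the object language: no predicate variables. Quantifier-free ones. *)
Fixpoint qf (F : formula) : Prop :=
  match F with
  | FBot | FEq _ _ | FPred _ _ => True
  | FPVar _ _ => False
  | FAnd G H | FOr G H | FImp G H => qf G /\ qf H
  | FAll _ _ | FEx _ _ => False
  end.

Definition term_consts (t : term) : list nat :=
  match t with TVar _ => [] | TConst k => [k] end.
Definition term_vars (t : term) : list nat :=
  match t with TVar x => [x] | TConst _ => [] end.

Fixpoint consts (F : formula) : list nat :=
  match F with
  | FBot => []
  | FEq t1 t2 => term_consts t1 ++ term_consts t2
  | FPred _ ts | FPVar _ ts => flat_map term_consts ts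
  | FAnd G H | FOr G H | FImp G H => consts G ++ consts H
  | FAll _ G | FEx _ G => consts G
  end.

(* Restricted variables RV(F) for quantifier-free F (as a list; order/duplicates irrelevant). *)
Fixpoint RV (F : formula) : list nat :=
  match F with
  | FBot => []
  | FEq (TVar _) (TVar _) => []
  | FEq t1 t2 => term_vars t1 ++ term_vars t2
  | FPred _ ts | FPVar _ ts => flat_map term_vars ts
  | FAnd G H => RV G ++ RV H
  | FOr G H => filter (fun x => existsb (Nat.eqb x) (RV H)) (RV G)
  | FImp _ _ => []
  | FAll _ _ | FEx _ _ => [] (* not used: RV is only defined for quantifier-free F *)
  end.

Record structure := {
  dom : Type;
  dom_inhabited : dom;
  iconst : nat -> dom;
  ipred : nat -> list dom -> Prop;
  ipvar : nat -> list dom -> Prop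
}.

Definition eval_term (M : structure) (v : nat -> dom M) (t : term) : dom M :=
  match t with TVar x => v x | TConst k => iconst M k end.

Definition update {D : Type} (v : nat -> D) (x : nat) (d : D) : nat -> D :=
  fun y => if Nat.eqb y x then d else v y.

Fixpoint sat (M : structure) (v : nat -> dom M) (F : formula) : Prop :=
  match F with
  | FBot => False
  | FEq t1 t2 => eval_term M v t1 = eval_term M v t2
  | FPred i ts => ipred M i (map (eval_term M v) ts)
  | FPVar i ts => ipvar M i (map (eval_term M v) ts)
  | FAnd G H => sat M v G /\ sat M v H
  | FOr G H => sat M v G \/ sat M v H
  | FImp G H => sat M v G -> sat M v H
  | FAll x G => forall d : dom M, sat M (update v x d) G
  | FEx x G => exists d : dom M, sat M (update v x d) G
  end.

Definition valid (F : formula) : Prop :=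
  forall (M : structure) (v : nat -> dom M), sat M v F.

(** Satisfying [F^*(e_c)] forces each restricted variable of [F] to denote
    a constant of [c]: an atom [p(t)] becomes [p(t) /\ in_c(t)], an equation
    [x = k] with [k] in [c] already says so, a conjunction inherits the
    restricted variables of both conjuncts and a disjunction only those common
    to both disjuncts. *)

From Stdlib Require Import List.

Lemma sat_bigAnd M v l :
  sat M v (bigAnd l) <-> forall f, In f l -> sat M v f.
Proof.
  induction l as [|f [|g l] IH]; cbn [bigAnd sat In] in *.
  - split; [intros _ f []|intros _ []].
  - split; [intros H ? [<-|[]]; exact H|intros H; apply H; auto].
  - rewrite IH. split.
    + intros [Hf Hl] h [<-|Hh]; auto.
    + intros H; split; auto.
Qed.

Lemma sat_bigOr M v l :
  sat M v (bigOr l) <-> exists f, In f l /\ sat M v f.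
Proof.
  induction l as [|f [|g l] IH]; cbn [bigOr sat In] in *.
  - split; [tauto|intros [f [[] _]]].
  - split; [eauto|intros [h [[<-|[]] Hh]]; exact Hh].
  - rewrite IH. split.
    + intros [Hf|[h [Hh Hs]]]; eauto.
    + intros [h [[<-|Hh] Hs]]; eauto.
Qed.

Definition in_consts (M : structure) (c : list nat) (d : dom M) : Prop :=
  exists k, In k c /\ d = iconst M k.

Lemma sat_in_c M v c ts :
  sat M v (in_c c ts) <-> forall t, In t ts -> in_consts M c (eval_term M v t).
Proof.
  unfold in_c, in_consts. rewrite sat_bigAnd. split.
  - intros H t Ht.
    apply (in_map (fun t => bigOr (map (fun k => FEq t (TConst k)) c))), H in Ht.
    apply sat_bigOr in Ht as [f [Hf Hs]].
    apply in_map_iff in Hf as [k [<- Hk]]. eauto.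
  - intros H f Hf.
    apply in_map_iff in Hf as [t [<- Ht]].
    destruct (H t Ht) as [k [Hk E]].
    apply sat_bigOr. exists (FEq t (TConst k)). split; [exact (in_map (fun k => FEq t (TConst k)) c k Hk)|exact E].
Qed.

Lemma sat_in_c_vars M v c V :
  sat M v (in_c_vars c V) <-> forall x, In x V -> in_consts M c (v x).
Proof.
  unfold in_c_vars. rewrite sat_in_c. split.
  - intros H x Hx. exact (H (TVar x) (in_map TVar V x Hx)).
  - intros H t Ht. apply in_map_iff in Ht as [x [<- Hx]]. exact (H x Hx).
Qed.

Lemma in_c_restricts_vars M v c ts :
  sat M v (in_c c ts) ->
  forall x, In x (flat_map term_vars ts) -> in_consts M c (v x).
Proof.
  intros Hs x Hx. apply in_flat_map in Hx as [[y|k] [Ht Hx]]; cbn in Hx.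
  - destruct Hx as [<-|[]]. exact (proj1 (sat_in_c M v c ts) Hs (TVar y) Ht).
  - destruct Hx.
Qed.

Lemma star_e_restricts_RV M v c F :
  incl (consts F) c -> sat M v (star_e c F) ->
  forall x, In x (RV F) -> in_consts M c (v x).
Proof.
  unfold star_e.
  induction F as [| t1 t2 | i ts | i ts | G IHG H IHH | G IHG H IHH | G _ H _
                  | y G _ | y G _];
    cbn [star subst_e sat RV consts]; intros Hc Hs x Hx; try contradiction.
  - destruct t1 as [a|a], t2 as [b|b]; cbn in Hx, Hs, Hc; try contradiction;
      destruct Hx as [<-|[]].
    + exists b. split; [apply Hc; left|]; auto.
    + exists a. split; [apply Hc; left|]; auto.
  - exact (in_c_restricts_vars M v c ts (proj2 Hs) x Hx).
  - exact (in_c_restricts_vars M v c ts (proj2 Hs) x Hx).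
  - apply incl_app_inv in Hc as [HcG HcH]. destruct Hs as [HsG HsH].
    apply in_app_or in Hx as [Hx|Hx]; [apply IHG|apply IHH]; assumption.
  - apply incl_app_inv in Hc as [HcG HcH].
    apply filter_In in Hx as [HxG HxH].
    apply existsb_exists in HxH as [z [HzH E]].
    apply PeanoNat.Nat.eqb_eq in E; subst z.
    destruct Hs as [Hs|Hs]; [apply IHG|apply IHH]; assumption.
Qed.

Theorem lemma2 (F : formula) (c : list nat) :
  qf F ->
  (forall k, In k (consts F) -> In k c) ->
  valid (FImp (star_e c F) (in_c_vars c (RV F))).
Proof.
  intros _ Hc M v Hs.
  apply sat_in_c_vars.
  exact (star_e_restricts_RV M v c F Hc Hs).
Qed.
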